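(* Let $R$ be an $\mathbb N$-graded ring with $R_0$ a field, and let $\mathfrak m$ be its homogeneous maximal ideal. Let $M,N$ be finitely generated graded $R$-modules with $N$ torsion-free. If $\phi\colon M_{\mathfrak m}\to N_{\mathfrak m}$ is a morphism of $R_{\mathfrak m}$-modules, then there is a morphism of $R$-modules $\tilde\phi\colon M\to N$ such that $\tilde\phi\otimes_R R_{\mathfrak m}=u\phi$ for some unit $u$ of $R_{\mathfrak m}$. *)

From mathcomp Require Import all_boot all_order all_algebra.
Set Implicit Arguments. Unset Strict Implicit. Unset Printing Implicit Defensive.
Import GRing.Theory.
Local Open Scope ring_scope.

Definition direct_sum_grading (I : eqType) (V : zmodType) (G : I -> pred V) :=
  [/\ (forall i, 0 \in G i),
      (forall i x y, x \in G i -> y \in G i -> x - y \in G i),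
      (forall v : V, exists (s : seq I) (c : I -> V),
          [/\ uniq s, (forall i, c i \in G i) & v = \sum_(i <- s) c i]) &
      (forall (s : seq I) (c : I -> V), uniq s -> (forall i, c i \in G i) ->
          \sum_(i <- s) c i = 0 -> forall i, i \in s -> c i = 0)].

Definition Ngraded_ring (R : comNzRingType) (Rg : nat -> pred R) :=
  [/\ direct_sum_grading Rg, 1 \in Rg 0%N &
      forall i j (x y : R), x \in Rg i -> y \in Rg j -> x * y \in Rg (i + j)%N].

Definition deg0_field (R : comNzRingType) (Rg : nat -> pred R) :=
  forall x, x \in Rg 0%N -> x != 0 -> exists2 y, y \in Rg 0%N & x * y = 1.

Definition hom_max_ideal (R : comNzRingType) (Rg : nat -> pred R) (r : R) : Prop :=
  exists (s : seq nat) (c : nat -> R),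
    [/\ (forall i, c i \in Rg i), c 0%N = 0 & r = \sum_(i <- s) c i].

Definition graded_module (R : comNzRingType) (Rg : nat -> pred R)
    (M : lmodType R) (Mg : int -> pred M) :=
  direct_sum_grading Mg /\
  forall i j (r : R) (x : M), r \in Rg i -> x \in Mg j -> r *: x \in Mg (i%:Z + j).

Definition fin_gen (R : comNzRingType) (M : lmodType R) :=
  exists s : seq M, forall x : M,
    exists c : 'I_(size s) -> R, x = \sum_(i < size s) c i *: s`_i.

Definition nonzerodivisor (R : comNzRingType) (r : R) :=
  forall a : R, r * a = 0 -> a = 0.

Definition torsion_free (R : comNzRingType) (M : lmodType R) :=
  forall (r : R) (x : M), nonzerodivisor r -> r *: x = 0 -> x = 0.

Section Loc.
Variables (R : comNzRingType) (Rg : nat -> pred R).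
Local Notation inm := (hom_max_ideal Rg).

Definition loc_eq (M : lmodType R) (p q : M * R) :=
  exists2 w : R, ~ inm w & w *: (q.2 *: p.1 - p.2 *: q.1) = 0.

Definition locR_eq (p q : R * R) :=
  exists2 w : R, ~ inm w & w * (q.2 * p.1 - p.2 * q.1) = 0.

Definition locR_unit (u : R * R) :=
  ~ inm u.2 /\ exists2 v : R * R, ~ inm v.2 & locR_eq (u.1 * v.1, u.2 * v.2) (1, 1).

Definition loc_add (M : lmodType R) (p q : M * R) : M * R :=
  (q.2 *: p.1 + p.2 *: q.1, p.2 * q.2).

Definition loc_scale (M : lmodType R) (a : R * R) (p : M * R) : M * R :=
  (a.1 *: p.1, a.2 * p.2).

(* phi : M_m -> N_m, given on representatives x/s (s not in m), is a
   well-defined morphism of R_m-modules. *)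
Definition loc_hom (M N : lmodType R) (phi : M -> R -> N * R) :=
  [/\ (forall x s, ~ inm s -> ~ inm (phi x s).2),
      (forall x s y t, ~ inm s -> ~ inm t -> loc_eq (x, s) (y, t) ->
          loc_eq (phi x s) (phi y t)),
      (forall x s y t, ~ inm s -> ~ inm t ->
          loc_eq (let p := loc_add (x, s) (y, t) in phi p.1 p.2)
                 (loc_add (phi x s) (phi y t))) &
      (forall a b x s, ~ inm b -> ~ inm s ->
          loc_eq (let p := loc_scale (a, b) (x, s) in phi p.1 p.2)
                 (loc_scale (a, b) (phi x s)))].
End Loc.

(* Outside m an element has a nonzero, hence invertible, degree-0 component, so
   it is a nonzerodivisor, and fractions over it can be compared by
   cross-multiplication in the torsion-free module N.  If g_1, ..., g_k generate
   M and phi(g_i/1) = n_i/s_i, put S := s_1 ... s_k.  Then S phi(x/1) has a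
   representative with denominator 1 for every x, which defines a linear map
   phit : M -> N with phit/1 = (S/1) phi, and S/1 is a unit of R_m. *)
From mathcomp Require Import all_boot all_order all_algebra.
From mathcomp Require Import ring zify.
From HB Require Import structures.
From Stdlib Require Import ClassicalEpsilon.
Set Implicit Arguments. Unset Strict Implicit.
Import GRing.Theory.
Local Open Scope ring_scope.

Lemma torsion_free_scalerI (R : comNzRingType) (N : lmodType R) (w : R) (x y : N) :
  torsion_free N -> nonzerodivisor w -> w *: x = w *: y -> x = y.
Proof.
move=> tfN nzw e; apply/eqP; rewrite -subr_eq0; apply/eqP.
by apply: (tfN _ _ nzw); rewrite scalerBr e subrr.
Qed.

Lemma horner1_iota (R : comNzRingType) (p : {poly R}) :
  p.[1] = \sum_(i <- iota 0 (size p)) p`_i.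
Proof.
rewrite horner_coef -(big_mkord xpredT (fun i => p`_i * 1 ^+ i)) /index_iota subn0.
by apply: eq_bigr => i _; rewrite expr1n mulr1.
Qed.

Section GradedRing.
Variables (R : comNzRingType) (Rg : nat -> pred R).
Hypotheses (hR : Ngraded_ring Rg) (hR0 : deg0_field Rg).
Local Notation inm := (hom_max_ideal Rg).

Lemma homog0 i : 0 \in Rg i.
Proof. by case: hR => [[]]. Qed.

Lemma homogD i x y : x \in Rg i -> y \in Rg i -> x + y \in Rg i.
Proof.
case: hR => [[_ hsub _ _] _ _] hx hy.
have hny : - y \in Rg i by rewrite -sub0r; apply: hsub; rewrite ?homog0.
by rewrite -[y]opprK; apply: hsub.
Qed.

Lemma homog_sum i (I : Type) (r : seq I) (F : I -> R) :
  (forall j, F j \in Rg i) -> \sum_(j <- r) F j \in Rg i.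
Proof.
move=> hF; apply: (big_ind (fun x => x \in Rg i)); first exact: homog0.
  by move=> ? ?; apply: homogD.
by move=> j _; apply: hF.
Qed.

(* The homogeneous components of r are the coefficients of a polynomial p with
   p.[1] = r; multiplying elements then multiplies these polynomials. *)
Definition homog_decomp (r : R) (p : {poly R}) :=
  (forall i, p`_i \in Rg i) /\ p.[1] = r.

Lemma homog_decomp_sum (s : seq nat) (c : nat -> R) : (forall i, c i \in Rg i) ->
  homog_decomp (\sum_(i <- s) c i) (\sum_(i <- s) c i *: 'X^i).
Proof.
move=> hc; split.
  move=> k; rewrite coef_sum; apply: homog_sum => j.
  rewrite coefZ coefXn; case: eqP => [->|_]; first by rewrite mulr1.
  by rewrite mulr0 homog0.
rewrite horner_sum; apply: eq_bigr => i _.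
by rewrite hornerZ hornerXn expr1n mulr1.
Qed.

Lemma homog_decomp_exists r : exists p, homog_decomp r p.
Proof.
case: hR => [[_ _ hex _] _ _].
have [s [c [_ hc ->]]] := hex r.
by eexists; apply: homog_decomp_sum.
Qed.

Lemma homog_decomp_uniq r p q : homog_decomp r p -> homog_decomp r q -> p = q.
Proof.
case: hR => [[_ hsub _ huniq] _ _] [hp <-] [hq e].
apply: subr0_eq; set d := p - q.
have hd i : d`_i \in Rg i by rewrite coefB; apply: hsub.
have hd0 : \sum_(i <- iota 0 (size d)) d`_i = 0.
  by rewrite -horner1_iota /d hornerD hornerN e subrr.
apply/polyP => i; rewrite coef0.
have [hi|hi] := ltnP i (size d); last by rewrite nth_default.
apply: (huniq (iota 0 (size d)) (fun i => d`_i)) => //; first exact: iota_uniq.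
by rewrite mem_iota add0n hi.
Qed.

Lemma homog_decompM a b p q :
  homog_decomp a p -> homog_decomp b q -> homog_decomp (a * b) (p * q).
Proof.
case: hR => [_ _ hmul] [hp ea] [hq eb]; split; last by rewrite hornerM ea eb.
move=> i; rewrite coefM; apply: homog_sum => j.
have hj : (j <= i)%N by rewrite -ltnS.
by have := hmul _ _ _ _ (hp j) (hq (i - j)%N); rewrite subnKC.
Qed.

Lemma homog_decomp0 : homog_decomp 0 0.
Proof. by split; [move=> i; rewrite coef0 homog0 | rewrite horner0]. Qed.

Lemma hom_max_idealE r p : homog_decomp r p -> (inm r <-> p`_0 = 0).
Proof.
move=> hp; split.
  move=> [s [c [hc c0 er]]].
  have := homog_decomp_sum s hc; rewrite -er => /(homog_decomp_uniq hp) ->.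
  rewrite coef_sum big1 // => i _; rewrite coefZ coefXn.
  by case: eqP => [<-|_]; rewrite ?c0 ?mul0r ?mulr0.
move=> p0; exists (iota 0 (size p)), (fun i => p`_i); split => //.
  by move=> i; case: hp.
by case: hp => _ <-; rewrite horner1_iota.
Qed.

Lemma notin_hom_max_idealP r : ~ inm r -> exists2 p, homog_decomp r p & p`_0 != 0.
Proof.
move=> h; have [p hp] := homog_decomp_exists r; exists p => //.
by apply/eqP => /(hom_max_idealE hp).
Qed.

Lemma notin_hom_max_ideal1 : ~ inm 1.
Proof.
case: hR => [_ h1 _].
have hd : homog_decomp 1 1.
  split; last by rewrite hornerC.
  by move=> [|i]; rewrite coef1 //= homog0.
by move/(hom_max_idealE hd); rewrite coef1 /=; apply/eqP; apply: oner_neq0.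
Qed.

Lemma notin_hom_max_idealM a b : ~ inm a -> ~ inm b -> ~ inm (a * b).
Proof.
move=> /notin_hom_max_idealP [p hp p0] /notin_hom_max_idealP [q hq /eqP q0].
move/(hom_max_idealE (homog_decompM hp hq)); rewrite coef0M => e.
have [y _ ey] := hR0 (proj1 hp 0%N) p0.
by apply: q0; rewrite -[q`_0]mul1r -ey mulrAC e mul0r.
Qed.

Lemma notin_hom_max_ideal_prod (I : Type) (r : seq I) (F : I -> R) :
  (forall i, ~ inm (F i)) -> ~ inm (\prod_(i <- r) F i).
Proof.
move=> hF; apply: (big_ind (fun x => ~ inm x)) => //.
  exact: notin_hom_max_ideal1.
by move=> ? ?; apply: notin_hom_max_idealM.
Qed.

(* A lowest nonzero component of a would survive in w * a, its coefficient
   being multiplied by the invertible degree-0 component of w. *)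
Lemma notin_hom_max_ideal_nzd w : ~ inm w -> nonzerodivisor w.
Proof.
move=> /notin_hom_max_idealP [p hp p0] a e.
have [q hq] := homog_decomp_exists a.
have := homog_decompM hp hq; rewrite e => /(homog_decomp_uniq homog_decomp0) pq.
have [y _ ey] := hR0 (proj1 hp 0%N) p0.
suff q0 : q = 0 by case: hq => _ <-; rewrite q0 horner0.
suff qk k : q`_k = 0 by apply/polyP => k; rewrite coef0 qk.
elim/ltn_ind: k => k IH.
have : (p * q)`_k = 0 by rewrite -pq coef0.
rewrite coefM big_ord_recl /= subn0 big1 ?addr0 => [hk|j _].
  by rewrite -[q`_k]mul1r -ey mulrAC hk mul0r.
by rewrite IH ?mulr0 //; have := ltn_ord j; rewrite /bump; lia.
Qed.

Lemma locR_unit_num s : ~ inm s -> locR_unit Rg (s, 1).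
Proof.
move=> hs; split=> /=; first exact: notin_hom_max_ideal1.
exists (1, s) => //; exists 1; first exact: notin_hom_max_ideal1.
by rewrite /= !mul1r !mulr1 subrr.
Qed.

Lemma loc_eq_cross (N : lmodType R) : torsion_free N ->
  forall p q : N * R, loc_eq Rg p q -> q.2 *: p.1 = p.2 *: q.1.
Proof.
move=> tfN p q [w hw e]; apply/eqP; rewrite -subr_eq0; apply/eqP.
exact: (tfN _ _ (notin_hom_max_ideal_nzd hw)) e.
Qed.

End GradedRing.

Section Lift.
Variables (R : comNzRingType) (Rg : nat -> pred R).
Hypotheses (hR : Ngraded_ring Rg) (hR0 : deg0_field Rg).
Local Notation inm := (hom_max_ideal Rg).
Variables (M N : lmodType R) (phi : M -> R -> N * R) (g : seq M).
Hypotheses (tfN : torsion_free N) (hphi : loc_hom Rg phi).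
Hypothesis hg : forall x : M,
  exists c : 'I_(size g) -> R, x = \sum_(i < size g) c i *: g`_i.

Definition gens_denom := \prod_(i < size g) (phi g`_i 1).2.

(* n / 1 = gens_denom * phi (x / 1) in N_m, cross-multiplied. *)
Definition lift_rel x n := gens_denom *: (phi x 1).1 = (phi x 1).2 *: n.

Let h1 := notin_hom_max_ideal1 hR.
Let hden x : ~ inm (phi x 1).2 := let: And4 hden _ _ _ := hphi in hden x 1 h1.
Arguments hden : clear implicits.
Local Notation cross := (loc_eq_cross hR hR0 tfN).
Local Notation scalerI hw :=
  (torsion_free_scalerI tfN (notin_hom_max_ideal_nzd hR hR0 hw)).

Lemma gens_denom_notin : ~ inm gens_denom.
Proof.
by rewrite /gens_denom; apply: (notin_hom_max_ideal_prod hR hR0) => i; apply: hden.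
Qed.

Lemma lift_rel_uniq x n n' : lift_rel x n -> lift_rel x n' -> n = n'.
Proof. by rewrite /lift_rel => -> /(scalerI (hden x)). Qed.

Lemma lift_rel0 : lift_rel 0 0.
Proof.
case: hphi => _ _ _ hscal.
have := cross (hscal 0 1 0 1 h1 h1); rewrite /= scale0r mulr1 mul1r scale0r.
rewrite /lift_rel scaler0 -(scaler0 _ (phi 0 1).2) => /(scalerI (hden 0)) ->.
by rewrite !scaler0.
Qed.

Lemma lift_relD x n x' n' :
  lift_rel x n -> lift_rel x' n' -> lift_rel (x + x') (n + n').
Proof.
case: hphi => _ _ hadd _.
have := cross (hadd x 1 x' 1 h1 h1); rewrite /= !scale1r mulr1 /lift_rel.
have := hden x; have := hden x'.
case: (phi x 1) => [a al]; case: (phi x' 1) => [b be]; case: (phi (x + x') 1) => [z ga] /=.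
move=> hbe hal e hx hx'.
apply: (scalerI (notin_hom_max_idealM hR hR0 hal hbe)).
rewrite scalerA [_ * gens_denom]mulrC -(scalerA gens_denom) e !scalerDr !scalerA.
rewrite (_ : gens_denom * ga * be = (ga * be) * gens_denom); last by ring.
rewrite (_ : gens_denom * ga * al = (ga * al) * gens_denom); last by ring.
rewrite -!(scalerA _ gens_denom) hx hx' !scalerA.
by congr (_ *: _ + _ *: _); ring.
Qed.

Lemma lift_relZ r x n : lift_rel x n -> lift_rel (r *: x) (r *: n).
Proof.
case: hphi => _ _ _ hscal.
have := cross (hscal r 1 x 1 h1 h1); rewrite /= mulr1 /lift_rel.
have := hden x.
case: (phi x 1) => [a al]; case: (phi (r *: x) 1) => [z ga] /= hal e hx.
apply: (scalerI hal).
rewrite scalerA [_ * gens_denom]mulrC -(scalerA gens_denom) -(mul1r al) e mul1r.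
rewrite !scalerA (_ : gens_denom * ga * r = (ga * r) * gens_denom); last by ring.
by rewrite -scalerA hx !scalerA; congr (_ *: _); ring.
Qed.

Lemma lift_rel_gen (i : 'I_(size g)) :
  lift_rel g`_i ((\prod_(j < size g | j != i) (phi g`_j 1).2) *: (phi g`_i 1).1).
Proof. by rewrite /lift_rel scalerA /gens_denom (bigD1 i). Qed.

Lemma lift_rel_exists x : exists n, lift_rel x n.
Proof.
have [c ->] := hg x; eexists.
apply: (big_ind2 lift_rel lift_rel0 lift_relD) => i _.
exact/lift_relZ/lift_rel_gen.
Qed.

Lemma lift_linear_exists : exists f : {linear M -> N}, forall x, lift_rel x (f x).
Proof.
pose f x := proj1_sig (constructive_indefinite_description _ (lift_rel_exists x)).
have hf x : lift_rel x (f x) :=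
  proj2_sig (constructive_indefinite_description _ (lift_rel_exists x)).
have f_lin : linear f.
  move=> a x y; apply: (lift_rel_uniq (hf _)).
  by apply: lift_relD; [apply: lift_relZ|]; apply: hf.
by exists (HB.pack_for {linear M -> N} f (GRing.isLinear.Build _ _ _ _ f f_lin)).
Qed.

Lemma lift_rel_loc_eq x n s : lift_rel x n -> ~ inm s ->
  loc_eq Rg (n, s) (loc_scale (gens_denom, 1) (phi x s)).
Proof.
case: hphi => _ _ _ hscal hx hs; exists 1 => //=.
rewrite scale1r mul1r; apply/eqP; rewrite subr_eq0; apply/eqP.
have := cross (hscal 1 s x 1 hs h1); move: hx; rewrite /lift_rel.
have := hden x; rewrite /= !scale1r mulr1.
case: (phi x 1) => [a al]; case: (phi x s) => [y be] /= hal hx e.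
apply: (scalerI hal).
rewrite scalerA [al * be]mulrC -(scalerA be) -hx scalerA [be * _]mulrC.
by rewrite -(scalerA gens_denom) -e !scalerA; congr (_ *: _); ring.
Qed.

End Lift.

Theorem lemma2p3 (R : comNzRingType) (Rg : nat -> pred R)
    (M N : lmodType R) (Mg : int -> pred M) (Ng : int -> pred N)
    (hR : Ngraded_ring Rg) (hR0 : deg0_field Rg)
    (hM : graded_module Rg Mg) (hN : graded_module Rg Ng)
    (fgM : fin_gen M) (fgN : fin_gen N) (tfN : torsion_free N)
    (phi : M -> R -> N * R) (hphi : loc_hom Rg phi) :
  exists (phit : {linear M -> N}) (u : R * R),
    locR_unit Rg u /\
    forall (x : M) (s : R), ~ hom_max_ideal Rg s ->
      loc_eq Rg (phit x, s) (loc_scale u (phi x s)).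
Proof.
have [g hg] := fgM.
have [phit hphit] := lift_linear_exists hR hR0 tfN hphi hg.
exists phit, (gens_denom phi g, 1); split.
  exact/(locR_unit_num hR)/(gens_denom_notin hR hR0).
by move=> x s hs; apply: lift_rel_loc_eq.
Qed.
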